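(* Let $\mathcal{C}=\mathsf{CSS}(A,B)$ be a non-splitting CSS code on $n$ qubits, and let $U$ be a unitary that is $1$-local-Clifford partially addressable on $\mathcal{C}$. Then any $1$-local Clifford circuit that realizes this partial addressing of $U$, written in the normal form $V\cdot Q$ (with $V=\bigotimes_i V_i$, each $V_i\in\{I,P,HP,PH,PHP,H\}$, and $Q$ a Pauli circuit), contains no $H$, $PH$, or $HP$ gates, i.e. $V_i\notin\{H,PH,HP\}$ for all $i$.
   Context: A CSS code $\mathsf{CSS}(A,B)$ on $n$ qubits is given by subspaces $A,B\subseteq\mathbb{F}_2^n$ with $a\cdot b=0$ for all $a\in A,b\in B$; its codespace is the common $+1$-eigenspace of all $X^a$ ($a\in A$) and $Z^b$ ($b\in B$), where for $a\in\mathbb{F}_2^n$ and a single-qubit gate $G$, $G^a=\bigotimes_{i:a_i=1}G_i$. A logical operator is a unitary preserving the codespace. For $a\in\mathbb{F}_2^n$ and $h\subseteq\{1,\dots,n\}$, $a\cap h$ is the vector with $(a\cap h)_i=1$ iff $a_i=1$ and $i\in h$. A subspace $A$ splits on a non-empty $h\subsetneq\{1,\dots,n\}$ if $A=A_1\oplus A_2$ where $A_1$ has support $h$ and $A_2$ is supported on the complement of $h$; the code splits on $h$ if both $A$ and $B$ split on $h$; it is non-splitting if it splits on no such $h$. $P=\mathrm{diag}(1,i)$ is the phase gate and $H$ the Hadamard gate. A $1$-local Clifford circuit is a tensor product of single-qubit Clifford gates; every such circuit equals, up to global phase, $V\cdot Q$ with $Q$ a Pauli circuit and $V$ a tensor product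 of gates from $\{I,P,HP,PH,PHP,H\}$. Fix a choice of logical Pauli operators $\bar X_j,\bar Z_j$ ($j=1,\dots,k$) for the $k$ logical qubits. A logical operator $G$ has logical action $\bar W$, for a $k$-qubit unitary $W=\sum_j\alpha_jW_j$ expanded in Paulis $W_j$, if $G|\psi\rangle=\sum_j\alpha_j\bar W_j|\psi\rangle$ for all codestates, where $\bar W_j$ is the corresponding product of the fixed logical Paulis. For a $p$-qubit unitary $U$ and a family $\mathcal{F}$ of circuits, $U$ is $\mathcal{F}$-partially addressable on $\mathcal{C}$ if there exist a set $I$ of pairwise disjoint ordered $p$-tuples of logical qubits with $I\neq\emptyset$ and $I$ not covering all logical qubits, and a logical operator in $\mathcal{F}$ whose logical action is $\bar U$ applied to each tuple of $I$ (and the identity on the remaining logical qubits). Here $\mathcal{F}$ is the family of $1$-local Clifford circuits. *)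

From HB Require Import structures.
From mathcomp Require Import all_boot all_order all_algebra.
From mathcomp Require Import complex.
From mathcomp Require Import reals.
Set Implicit Arguments.
Unset Strict Implicit.
Unset Printing Implicit Defensive.
Import GRing.Theory Num.Theory.
Local Open Scope ring_scope.

(** vectors of F_2^n; the i-th coordinate of a is  a 0 i  *)
Notation bits n := 'rV['F_2]_n.

Definition supported_on n (a : bits n) (h : {set 'I_n}) : Prop :=
  forall i : 'I_n, a 0 i != 0 -> i \in h.

Definition dot2 n (a b : bits n) : 'F_2 := \sum_(i < n) a 0 i * b 0 i.

(** CSS(A,B) is well defined: a . b = 0 for all a in A, b in B *)
Definition css_orthogonal n (A B : {vspace bits n}) : Prop :=
  forall a b, a \in A -> b \in B -> dot2 a b = 0.

Definition splits_on n (A : {vspace bits n}) (h : {set 'I_n}) : Prop :=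
  exists A1 A2 : {vspace bits n},
    (A1 + A2)%VS = A /\ (A1 :&: A2)%VS = 0%VS /\
    (forall a, a \in A1 -> supported_on a h) /\
    (forall a, a \in A2 -> supported_on a (~: h)).

Definition code_splits_on n (A B : {vspace bits n}) (h : {set 'I_n}) : Prop :=
  splits_on A h /\ splits_on B h.

Definition non_splitting n (A B : {vspace bits n}) : Prop :=
  forall h : {set 'I_n}, h != set0 -> h != setT -> ~ code_splits_on A B h.

Section Quantum.
Variable C : numClosedFieldType.

(** a state of n qubits: amplitude of each computational basis vector |x> *)
Definition state n := bits n -> C.
Definition op n := state n -> state n.

Definition ofbit (x : 'F_2) : 'I_2 := inord (x : nat).

(** the tensor product  (x)_i g_i  of single-qubit gates g_i (2x2 matrices
    in the computational basis |0>,|1>) acting on n qubits *)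
Definition tensor n (g : 'I_n -> 'M[C]_2) : op n :=
  fun psi x => \sum_(y : bits n)
      (\prod_(i < n) g i (ofbit (x 0 i)) (ofbit (y 0 i))) * psi y.

Definition gpow n (G : 'M[C]_2) (a : bits n) : op n :=
  tensor (fun i => if a 0 i == 1 then G else 1%:M).

Definition Xg : 'M[C]_2 := \matrix_(i, j) (if i == j then 0 else 1).
Definition Zg : 'M[C]_2 := \matrix_(i, j) (if i == j then (-1) ^+ i else 0).
Definition Yg : 'M[C]_2 := 'i *: (Xg *m Zg).   (* = [[0,-i],[i,0]] *)
Definition Pg : 'M[C]_2 := \matrix_(i, j) (if i == j then 'i ^+ i else 0).
Definition Hg : 'M[C]_2 := (sqrtC 2)^-1 *: \matrix_(i, j) ((-1) ^+ (i * j)).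

Definition adj2 (g : 'M[C]_2) : 'M[C]_2 := (map_mx Num.conj g)^T.

Definition clifford1 (g : 'M[C]_2) : Prop :=
  adj2 g *m g = 1%:M /\
  forall s, s \in [:: Xg; Zg] ->
    exists (c : C) (t : 'M[C]_2), t \in [:: Xg; Yg; Zg] /\
      g *m s *m adj2 g = c *: t.

Definition one_local_clifford n (G : op n) : Prop :=
  exists g : 'I_n -> 'M[C]_2, (forall i, clifford1 (g i)) /\
    forall psi x, G psi x = tensor g psi x.

Inductive vgate := gI | gP | gHP | gPH | gPHP | gH.
Inductive pauli1 := pI | pX | pY | pZ.

Definition vgate_mx (v : vgate) : 'M[C]_2 :=
  match v with
  | gI => 1%:M | gP => Pg | gHP => Hg *m Pg | gPH => Pg *m Hg
  | gPHP => Pg *m Hg *m Pg | gH => Hg end.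

Definition pauli1_mx (q : pauli1) : 'M[C]_2 :=
  match q with pI => 1%:M | pX => Xg | pY => Yg | pZ => Zg end.

Definition nf_circuit n (c : C) (V : 'I_n -> vgate) (Q : 'I_n -> pauli1)
  : op n :=
  fun psi x => c * tensor (fun i => vgate_mx (V i))
                          (tensor (fun i => pauli1_mx (Q i)) psi) x.

Definition codestate n (A B : {vspace bits n}) (psi : state n) : Prop :=
  (forall a, a \in A -> forall x, gpow Xg a psi x = psi x) /\
  (forall b, b \in B -> forall x, gpow Zg b psi x = psi x).

Definition inner n (psi phi : state n) : C :=
  \sum_(x : bits n) (psi x)^* * phi x.

Definition logical_operator n (A B : {vspace bits n}) (G : op n) : Prop :=
  (forall psi phi, inner (G psi) (G phi) = inner psi phi) /\
  (forall psi, codestate A B psi -> codestate A B (G psi)).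

Record pauli_data n := PauliData { pc : C; pu : bits n; pv : bits n }.

Definition pauli_op n (P : pauli_data n) : op n :=
  fun psi x => pc P * gpow Xg (pu P) (gpow Zg (pv P) psi) x.

Definition valid_logicals n k (A B : {vspace bits n})
    (LX LZ : 'I_k -> pauli_data n) : Prop :=
  let X j := pauli_op (LX j) in
  let Z j := pauli_op (LZ j) in
  (forall j, pc (LX j) ^+ 4 = 1 /\ pc (LZ j) ^+ 4 = 1) /\
  (forall j, logical_operator A B (X j) /\ logical_operator A B (Z j)) /\
  (forall j psi x, X j (X j psi) x = psi x /\ Z j (Z j psi) x = psi x) /\
  (forall j psi x, X j (Z j psi) x = - Z j (X j psi) x) /\
  (forall j l, j != l -> forall psi x,
      X j (X l psi) x = X l (X j psi) x /\
      Z j (Z l psi) x = Z l (Z j psi) x /\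
      X j (Z l psi) x = Z l (X j psi) x).

Definition lbar_pow n k (L : 'I_k -> pauli_data n) (s : bits k) : op n :=
  fun psi => foldr (fun j phi => if s 0 j == 1 then pauli_op (L j) phi else phi)
                   psi (enum 'I_k).

Definition has_logical_action n k (A B : {vspace bits n})
    (LX LZ : 'I_k -> pauli_data n) (G : op n) (W : op k) : Prop :=
  exists alpha : bits k -> bits k -> C,
    (forall phi y, W phi y =
        \sum_(s : bits k) \sum_(t : bits k) alpha s t * gpow Xg s (gpow Zg t phi) y)
    /\
    (forall psi, codestate A B psi -> forall x, G psi x =
        \sum_(s : bits k) \sum_(t : bits k)
            alpha s t * lbar_pow LX s (lbar_pow LZ t psi) x).

(** a p-qubit operator given by its matrix in the computational basis,
    indexed by bit strings (bit l = qubit l) *)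
Definition unitary_ker p (U : bits p -> bits p -> C) : Prop :=
  forall x z, \sum_(y : bits p) (U y x)^* * U y z = (x == z)%:R.

Definition restrict k p (x : bits k) (tau : p.-tuple 'I_k) : bits p :=
  \row_(l < p) x 0 (tnth tau l).

Definition covered k p (I : {set p.-tuple 'I_k}) (j : 'I_k) : bool :=
  [exists tau in I, j \in tau].

Definition valid_tuples k p (I : {set p.-tuple 'I_k}) : Prop :=
  (forall tau, tau \in I -> uniq tau) /\
  (forall tau sigma, tau \in I -> sigma \in I -> tau != sigma ->
     forall j, j \in tau -> j \notin sigma) /\
  I != set0 /\
  (exists j, ~~ covered I j).

Definition addressed_op k p (U : bits p -> bits p -> C)
    (I : {set p.-tuple 'I_k}) : op k :=
  fun phi x => \sum_(y : bits k)
     ((\prod_(tau in I) U (restrict x tau) (restrict y tau)) *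
      (\prod_(j < k | ~~ covered I j) (x 0 j == y 0 j)%:R)) * phi y.

Definition realizes_addressing n k p (A B : {vspace bits n})
    (LX LZ : 'I_k -> pauli_data n) (U : bits p -> bits p -> C)
    (I : {set p.-tuple 'I_k}) (G : op n) : Prop :=
  valid_tuples I /\ logical_operator A B G /\
  has_logical_action A B LX LZ G (addressed_op U I).

Definition partially_addressable n k p (A B : {vspace bits n})
    (LX LZ : 'I_k -> pauli_data n) (U : bits p -> bits p -> C) : Prop :=
  exists (I : {set p.-tuple 'I_k}) (G : op n),
    one_local_clifford G /\ realizes_addressing A B LX LZ U I G.

End Quantum.

From Pilot Require Import Defs.
From HB Require Import structures.
From mathcomp Require Import all_boot all_order all_algebra.
From mathcomp Require Import complex.
From mathcomp Require Import reals.
From mathcomp Require Import ring.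
Set Implicit Arguments.
Unset Strict Implicit.
Unset Printing Implicit Defensive.
Import GRing.Theory Num.Theory.
Local Open Scope ring_scope.

(* Write Paulis as [c X^u Z^v]. Conjugating such a Pauli by the normal form
   [V.Q] of the circuit [G] gives, up to phase, the Pauli whose exponents are
   the image of [(u, v)] under the qubitwise symplectic map of [V] ([Q] only
   contributes a sign). Two Paulis agreeing on the code have exponents that
   differ by an element of [A x B], and a unitary logical operator maps
   stabilizers to stabilizers. If some [V_i] is [H], [PH] or [HP], this makes
   [A] and [B] invariant under the mask of the qubits where [V] is of this
   type, so by non-splitting [V] is of this type everywhere; then [A = B] and,
   again by non-splitting, [V] is constantly [H], [PH] or [HP]. On the other
   hand, the logical action has no [X_j] or [Z_j] component on a logical
   qubit [j] outside the addressed tuples, so [G] commutes on the code with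
   the logical [X_j] and [Z_j], and their exponents are fixed by the
   symplectic map up to stabilizers. For the three remaining gates this
   forces the logical [X_j] and [Z_j] to commute, a contradiction. *)

Lemma F2_cases (a : 'F_2) : a = 0 \/ a = 1.
Proof. by case: a => [[|[|m]] Hm]; [left|right|]; try exact: val_inj. Qed.

Lemma F2_addxx (a : 'F_2) : a + a = 0.
Proof. exact/addrr_pchar2/pchar_Fp. Qed.

Lemma F2_mul_eq1 (a b : 'F_2) : a * b = 1 -> a = 1 /\ b = 1.
Proof. by case: (F2_cases a) => ->; case: (F2_cases b) => ->; rewrite ?mul0r ?mulr0. Qed.

Lemma ofbit0 : ofbit 0 = 0. Proof. by apply: val_inj; rewrite /= inordK. Qed.
Lemma ofbit1 : ofbit 1 = 1. Proof. by apply: val_inj; rewrite /= inordK. Qed.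

Section Bits.
Variable n : nat.
Implicit Types u v w x y z : bits n.

Lemma bits_addxx z : z + z = 0.
Proof. by apply/rowP => i; rewrite !mxE F2_addxx. Qed.

Lemma bits_addKx z y : z + (z + y) = y.
Proof. by rewrite addrA bits_addxx add0r. Qed.

Lemma bits_addxK z y : y + z + z = y.
Proof. by rewrite -addrA bits_addxx addr0. Qed.

Lemma bits_neq0 z : z != 0 -> exists i, z 0 i = 1.
Proof.
move=> z0; have [i zi] : exists i, z 0 i != 0.
  apply/existsP; rewrite -negb_forall; apply: contra z0 => /forallP z0.
  by apply/eqP/rowP => i; rewrite mxE; apply/eqP.
by exists i; case: (F2_cases (z 0 i)) zi => ->.
Qed.

Lemma dot2C u v : dot2 u v = dot2 v u.
Proof. by apply: eq_bigr => i _; rewrite mulrC. Qed.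

Lemma dot2Dr u v w : dot2 u (v + w) = dot2 u v + dot2 u w.
Proof. by rewrite /dot2 -big_split; apply: eq_bigr => i _; rewrite mxE mulrDr. Qed.

Lemma dot2Dl u v w : dot2 (u + v) w = dot2 u w + dot2 v w.
Proof. by rewrite dot2C dot2Dr !(dot2C w). Qed.

Lemma dot20 u : dot2 u 0 = 0.
Proof. by rewrite /dot2 big1 // => i _; rewrite mxE mulr0. Qed.

Lemma dot02 u : dot2 0 u = 0.
Proof. by rewrite dot2C dot20. Qed.

Lemma dot2_delta u i : dot2 u (delta_mx 0 i) = u 0 i.
Proof.
rewrite /dot2 (bigD1 i) //= big1 ?addr0 => [|j ji]; rewrite mxE ?eqxx ?mulr1 //.
by rewrite (negPf ji) andbF mulr0.
Qed.

End Bits.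

Definition mask_bits n (f : 'I_n -> 'F_2) (a : bits n) : bits n := \row_i (f i * a 0 i).

Lemma splits_on_mask_bits n (S : {vspace bits n}) (f : 'I_n -> 'F_2) :
  (forall a, a \in S -> mask_bits f a \in S) -> splits_on S [set i | f i == 1].
Proof.
move=> Sf; pose g i := 1 + f i.
have maskC a : mask_bits g a = a - mask_bits f a.
  by apply/rowP => i; rewrite !mxE mulrDl mul1r oppr_pchar2 ?pchar_Fp.
pose proj h := linfun (mulmxr (diag_mx (\row_i h i)) : bits n -> bits n).
have projE h a : proj h a = mask_bits h a.
  by rewrite lfunE /=; apply/rowP => i; rewrite mul_mx_diag !mxE mulrC.
exists (proj f @: S)%VS, (proj g @: S)%VS; split; [|split; [|split]].
- apply/eqP; rewrite eqEsubv; apply/andP; split.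
    rewrite subv_add; apply/andP; split; apply/subvP => _ /memv_imgP [a Sa ->].
      by rewrite projE Sf.
    by rewrite projE maskC rpredB ?Sf.
  apply/subvP => a Sa; rewrite -[a](subrK (mask_bits f a)) -maskC addrC.
  by apply: memv_add; rewrite -projE memv_img.
- apply/eqP; rewrite -subv0; apply/subvP => x /memv_capP [].
  move=> /memv_imgP [a _ ->] /memv_imgP [b _ /rowP eq_ab]; rewrite memv0.
  apply/eqP/rowP => i; have := eq_ab i; rewrite !projE !mxE /g.
  by case: (F2_cases (f i)) => -> => [|->]; rewrite ?F2_addxx !mul0r.
- move=> _ /memv_imgP [a _ ->] i; rewrite projE mxE inE.
  by case: (F2_cases (f i)) => ->; rewrite ?mul0r ?eqxx.
- move=> _ /memv_imgP [a _ ->] i; rewrite projE mxE !inE /g.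
  by case: (F2_cases (f i)) => ->; rewrite ?F2_addxx ?mul0r ?addr0 ?eqxx.
Qed.

Lemma non_splitting_mask_bits n (A B : {vspace bits n}) (f : 'I_n -> 'F_2) :
  non_splitting A B ->
  (forall a, a \in A -> mask_bits f a \in A) -> (forall b, b \in B -> mask_bits f b \in B) ->
  (forall i, f i = 1) \/ (forall i, f i = 0).
Proof.
move=> nsAB Af Bf.
have [hT|hNT] := eqVneq [set i | f i == 1] setT.
  by left => i; apply/eqP; move: (in_setT i); rewrite -hT inE.
have [h0|hN0] := eqVneq [set i | f i == 1] set0.
  right => i; case: (F2_cases (f i)) => // fi.
  by move: (in_set0 i); rewrite -h0 inE fi.
by case: (nsAB _ hN0 hNT); split; apply: splits_on_mask_bits.
Qed.

(* Up to the phase [conj_phase], [g^-1 X g = X^(xofX g) Z^(zofX g)] and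
   [g^-1 Z g = X^(xofZ g) Z^(zofZ g)]. *)
Definition xofX (g : vgate) : 'F_2 := if g is (gH | gHP) then 0 else 1.
Definition zofX (g : vgate) : 'F_2 := if g is (gI | gPHP) then 0 else 1.
Definition xofZ (g : vgate) : 'F_2 := if g is (gI | gP) then 0 else 1.
Definition zofZ (g : vgate) : 'F_2 := if g is (gH | gPH) then 0 else 1.

Definition conjx n (V : 'I_n -> vgate) (u v : bits n) : bits n :=
  \row_i (xofX (V i) * u 0 i + xofZ (V i) * v 0 i).
Definition conjz n (V : 'I_n -> vgate) (u v : bits n) : bits n :=
  \row_i (zofX (V i) * u 0 i + zofZ (V i) * v 0 i).

Definition pauli1_x (q : pauli1) : 'F_2 := if q is (pX | pY) then 1 else 0.
Definition pauli1_z (q : pauli1) : 'F_2 := if q is (pY | pZ) then 1 else 0.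

(* Holds exactly for [gH], [gPH] and [gHP]. *)
Definition hadamard_type (g : vgate) : bool := (zofX g == 1) && (xofZ g == 1).

Section Quantum.
Variable R : realType.
Local Notation C := R[i].

Definition sgn2 (b : 'F_2) : C := if b == 0 then 1 else -1.

Lemma sgn20 : sgn2 0 = 1. Proof. by []. Qed.
Lemma sgn21 : sgn2 1 = -1. Proof. by []. Qed.

Lemma sgn2D a b : sgn2 (a + b) = sgn2 a * sgn2 b.
Proof.
by case: (F2_cases a) => ->; case: (F2_cases b) => ->;
  rewrite ?(addr0, add0r, F2_addxx, mul1r, mulr1, mulrNN).
Qed.

Lemma sgn2K a : sgn2 a * sgn2 a = 1.
Proof. by rewrite -sgn2D F2_addxx. Qed.

Lemma sgn2_neq0 a : sgn2 a != 0.
Proof. by case: (F2_cases a) => ->; rewrite ?oppr_eq0 oner_eq0. Qed.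

Lemma sgn2_sum (I : finType) (F : I -> 'F_2) : \prod_i sgn2 (F i) = sgn2 (\sum_i F i).
Proof. by rewrite (big_morph sgn2 sgn2D sgn20). Qed.

Lemma oppr1_neq1 : (-1 : C) != 1.
Proof. by rewrite -subr_eq0 -opprD oppr_eq0 -mulr2n pnatr_eq0. Qed.

Lemma sgn2_eq1 a : sgn2 a = 1 -> a = 0.
Proof. by case: (F2_cases a) => -> // /eqP; rewrite (negPf oppr1_neq1). Qed.

Lemma sgn2_eqN1 a : sgn2 a = -1 -> a = 1.
Proof. by case: (F2_cases a) => -> // /eqP; rewrite eq_sym (negPf oppr1_neq1). Qed.

Lemma sum_sgn2_dot2 n (y : bits n) :
  \sum_x sgn2 (dot2 y x) = (y == 0)%:R * #|{: bits n}|%:R.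
Proof.
have [->|/bits_neq0 [i yi]] := eqVneq y 0.
  by rewrite mul1r -sum1_card natr_sum; apply: eq_bigr => x _; rewrite dot02.
rewrite mul0r; apply/eqP; set S := \sum_x _.
suff: S *+ 2 == 0 by rewrite mulrn_eq0.
(* translating by the i-th unit vector flips every sign *)
rewrite mulr2n {1}/S (reindex_inj (addIr (delta_mx 0 i))) -big_split big1 //= => x _.
by rewrite dot2Dr dot2_delta yi sgn2D mulrN1 addNr.
Qed.

Lemma card_bits_neq0 n : #|{: bits n}|%:R != 0 :> C.
Proof. by rewrite pnatr_eq0 -lt0n; apply/card_gt0P; exists 0. Qed.

Definition entry (g : 'M[C]_2) (a b : 'F_2) : C := g (ofbit a) (ofbit b).

Lemma entry_mul (g h : 'M[C]_2) a b :
  entry (g *m h) a b = entry g a 0 * entry h 0 b + entry g a 1 * entry h 1 b.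
Proof.
have E0 : ofbit 0 = ord0 by apply/val_inj; rewrite /= inordK.
have E1 : ofbit 1 = lift ord0 (ord0 : 'I_1) by apply/val_inj; rewrite /= inordK.
by rewrite /entry mxE !big_ord_recl big_ord0 addr0 E0 E1.
Qed.

Ltac F2_split a := case: (F2_cases a) => ->; rewrite ?ofbit0 ?ofbit1.
(* The value of [1 : 'I_2] is [1 %% 2]. *)
Ltac entry_simpl := rewrite ?mxE /= ?(modn_small (isT : 1 < 2))
  ?(mul0r, mul1r, mulr0, mulr1, addr0, add0r, sub0r, expr0, expr1).

Lemma entry1 a b : entry 1%:M a b = (b == a)%:R.
Proof. by rewrite /entry; F2_split a; F2_split b; entry_simpl. Qed.

Lemma entryX a b : entry (Xg C) a b = (b == a + 1)%:R.
Proof. by rewrite /entry; F2_split a; F2_split b; entry_simpl. Qed.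

Lemma entryZ a b : entry (Zg C) a b = (b == a)%:R * sgn2 b.
Proof. by rewrite /entry; F2_split a; F2_split b; entry_simpl. Qed.

Lemma entryY a b : entry (Yg C) a b = 'i * ((b == a + 1)%:R * sgn2 b).
Proof.
by rewrite /entry /Yg; F2_split a; F2_split b;
  rewrite !mxE !big_ord_recl big_ord0; entry_simpl.
Qed.

Lemma entryP a b : entry (Pg C) a b = (b == a)%:R * (if a == 0 then 1 else 'i).
Proof. by rewrite /entry; F2_split a; F2_split b; entry_simpl. Qed.

Lemma entryH a b : entry (Hg C) a b = (sqrtC 2)^-1 * sgn2 (a * b).
Proof. by rewrite /entry /Hg; F2_split a; F2_split b; entry_simpl. Qed.

Section Paulis.
Variable n : nat.
Implicit Types (c d : C) (u v : bits n) (psi phi : state C n).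

(* [pauli_fun c u v] is the operator [c X^u Z^v]. *)
Definition pauli_fun c u v : op C n :=
  fun psi x => c * sgn2 (dot2 v (x + u)) * psi (x + u).

Lemma pauli_fun_mull s c u v psi x : pauli_fun (s * c) u v psi x = s * pauli_fun c u v psi x.
Proof. by rewrite /pauli_fun !mulrA. Qed.

Lemma pauli_funZ c u v s phi x :
  pauli_fun c u v (fun y => s * phi y) x = s * pauli_fun c u v phi x.
Proof. by rewrite /pauli_fun mulrCA. Qed.

Lemma eq_pauli_fun c u v phi phi' :
  (forall y, phi y = phi' y) -> forall x, pauli_fun c u v phi x = pauli_fun c u v phi' x.
Proof. by move=> eq_phi x; rewrite /pauli_fun eq_phi. Qed.

Lemma pauli_fun_neq0 c u v psi x :
  c != 0 -> psi (x + u) != 0 -> pauli_fun c u v psi x != 0.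
Proof. by move=> c0 psi0; rewrite /pauli_fun !mulf_neq0 ?sgn2_neq0. Qed.

Lemma pauli_fun_comm c u v d u' v' psi x :
  pauli_fun c u v (pauli_fun d u' v' psi) x =
  sgn2 (dot2 v u' + dot2 v' u) * pauli_fun d u' v' (pauli_fun c u v psi) x.
Proof.
rewrite /pauli_fun -!addrA (addrC u u') !dot2Dr !sgn2D.
have := sgn2K (dot2 v u'); have := sgn2K (dot2 v' u); move: (sgn2 _) (sgn2 _) => s s' ss s's'.
by ring: ss s's'.
Qed.

Lemma tensor_pauli_fun (g : 'I_n -> 'M[C]_2) (w : 'I_n -> C) u v :
  (forall i a b, entry (g i) a b = w i * ((b == a + u 0 i)%:R * sgn2 (v 0 i * b))) ->
  forall psi x, tensor g psi x = pauli_fun (\prod_i w i) u v psi x.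
Proof.
move=> gE psi x; rewrite /tensor /pauli_fun (bigD1 (x + u)) //= [X in _ + X]big1 ?addr0.
  rewrite /dot2 -sgn2_sum -big_split /=; congr (_ * _).
  by apply: eq_bigr => i _; rewrite -/(entry _ _ _) gE mxE eqxx mul1r.
move=> y /negPf neq_y; apply/eqP; rewrite mulf_eq0 prodf_seq_eq0; apply/orP; left.
apply/hasP; have [i yi] : exists i, y 0 i != (x + u) 0 i.
  by apply/existsP; rewrite -negb_forall; apply: contraFN neq_y => /forallP eq_y;
     apply/eqP/rowP => i; apply/eqP.
exists i; rewrite ?mem_index_enum // -/(entry _ _ _) gE.
by move: yi; rewrite mxE => /negPf ->; rewrite mul0r mulr0 eqxx.
Qed.

Lemma gpowXE u psi x : gpow (Xg C) u psi x = psi (x + u).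
Proof.
rewrite /gpow (@tensor_pauli_fun _ (fun _ => 1) u 0) => [|i a b].
  by rewrite /pauli_fun dot02 big1 // !mul1r.
by rewrite mxE mul0r mul1r mulr1; case: (F2_cases (u 0 i)) => ->; rewrite ?entry1 ?entryX ?addr0.
Qed.

Lemma gpowZE v psi x : gpow (Zg C) v psi x = sgn2 (dot2 v x) * psi x.
Proof.
rewrite /gpow (@tensor_pauli_fun _ (fun _ => 1) 0 v) => [|i a b].
  by rewrite /pauli_fun addr0 big1 // !mul1r.
rewrite mxE addr0 mul1r; case: (F2_cases (v 0 i)) => ->;
  by rewrite ?entry1 ?entryZ ?mul0r ?mul1r ?mulr1.
Qed.

Lemma pauli_opE (P : pauli_data C n) : pauli_op P = pauli_fun (pc P) (pu P) (pv P).
Proof.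
by apply: boolp.funext => psi; apply: boolp.funext => x; rewrite /pauli_op gpowXE gpowZE mulrA.
Qed.

End Paulis.

Lemma anticommuting_pauli_dot2 n (P P' : pauli_data C n) : pc P != 0 -> pc P' != 0 ->
  (forall psi x, pauli_op P (pauli_op P' psi) x = - pauli_op P' (pauli_op P psi) x) ->
  dot2 (pv P) (pu P') + dot2 (pv P') (pu P) = 1.
Proof.
rewrite !pauli_opE => P_neq0 P'_neq0 anti.
apply: sgn2_eqN1.
have := anti (fun _ => 1) 0; rewrite pauli_fun_comm.
set Y := pauli_fun (pc P') _ _ _ 0 => E.
have Y_neq0 : Y != 0 by rewrite !pauli_fun_neq0 ?oner_neq0.
by apply: (mulIf Y_neq0); rewrite E mulN1r.
Qed.

Definition conj_phase (g : vgate) (u1 v1 : 'F_2) : C :=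
  match u1 == 0, v1 == 0 with
  | true, true => 1
  | true, false => if g is (gHP | gPHP) then - 'i else 1
  | false, true => match g with gP => - 'i | gPH => 'i | _ => 1 end
  | false, false => match g with gI => 1 | gH => -1 | gHP => 'i | _ => - 'i end
  end.

Lemma conj_phase_neq0 g u1 v1 : conj_phase g u1 v1 != 0.
Proof.
have i0 : ('i : C) != 0 by rewrite neq0Ci.
by case: g; case: (F2_cases u1) => ->; case: (F2_cases v1) => ->;
  rewrite /= ?oppr_eq0 ?oner_eq0.
Qed.

(* Entrywise form of [X^u1 Z^v1 g = conj_phase g u1 v1 * g X^u Z^v], where [(u, v)]
   is the image of [(u1, v1)] by the table of [xofX], ..., [zofZ]. *)
Lemma vgate_conj g u1 v1 a b :
  sgn2 (v1 * (a + u1)) * entry (vgate_mx C g) (a + u1) b =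
  conj_phase g u1 v1 * (sgn2 ((zofX g * u1 + zofZ g * v1) * b) *
    entry (vgate_mx C g) a (b + (xofX g * u1 + xofZ g * v1))).
Proof.
have ii := @sqrCi C.
case: g; F2_split u1; F2_split v1; F2_split a; F2_split b;
  rewrite /conj_phase /= ?entry_mul ?entryH ?entryP ?entry1 ?eqxx ?oner_eq0 /=
    ?(add0r, addr0, F2_addxx, mul0r, mulr0, mul1r, mulr1, sgn20, sgn21);
  ring: ii.
Qed.

Section Circuits.
Variable n : nat.
Implicit Types (g : 'I_n -> 'M[C]_2) (c : C) (u v : bits n) (psi phi : state C n).

Lemma tensorB g phi phi' x :
  tensor g (fun y => phi y - phi' y) x = tensor g phi x - tensor g phi' x.
Proof. by rewrite /tensor -sumrB; apply: eq_bigr => y _; rewrite mulrBr. Qed.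

Lemma eq_tensor g phi phi' :
  (forall y, phi y = phi' y) -> forall x, tensor g phi x = tensor g phi' x.
Proof. by move=> eq_phi x; apply: eq_bigr => y _; rewrite eq_phi. Qed.

Lemma tensor_pauli1 (Q : 'I_n -> pauli1) psi x :
  tensor (fun i => pauli1_mx C (Q i)) psi x =
  pauli_fun (\prod_i (if Q i is pY then 'i else 1))
    (\row_i pauli1_x (Q i)) (\row_i pauli1_z (Q i)) psi x.
Proof.
apply: tensor_pauli_fun => i a b; rewrite !mxE.
by case: (Q i); rewrite /= ?entry1 ?entryX ?entryZ ?entryY ?mul0r ?mul1r ?mulr1 ?addr0.
Qed.

Lemma pauli_fun_tensor_vgate (V : 'I_n -> vgate) c u v psi x :
  pauli_fun c u v (tensor (fun i => vgate_mx C (V i)) psi) x =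
  tensor (fun i => vgate_mx C (V i))
    (pauli_fun (c * \prod_i conj_phase (V i) (u 0 i) (v 0 i)) (conjx V u v) (conjz V u v) psi) x.
Proof.
pose w := \prod_i conj_phase (V i) (u 0 i) (v 0 i).
pose e (i : 'I_n) (y : bits n) := entry (vgate_mx C (V i)) (x 0 i) (y 0 i + conjx V u v 0 i).
transitivity (\sum_y c * w * (sgn2 (dot2 (conjz V u v) y) * \prod_i e i y) * psi y).
  rewrite /pauli_fun /tensor mulr_sumr; apply: eq_bigr => y _.
  have E : sgn2 (dot2 v (x + u)) *
      \prod_i vgate_mx C (V i) (ofbit ((x + u) 0 i)) (ofbit (y 0 i)) =
      w * (sgn2 (dot2 (conjz V u v) y) * \prod_i e i y).
    rewrite /dot2 -!sgn2_sum /w -!big_split; apply: eq_bigr => i _ /=.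
    by rewrite -/(entry _ _ _) /e !mxE vgate_conj.
  by ring: E.
rewrite (reindex_inj (addIr (conjx V u v))) /=; apply: eq_bigr => y _.
rewrite /pauli_fun /e (eq_bigr (fun i => entry (vgate_mx C (V i)) (x 0 i) (y 0 i))).
  by rewrite /entry /w; ring.
by move=> i _; rewrite mxE -addrA F2_addxx addr0.
Qed.

Lemma nf_circuit_conj c0 (V : 'I_n -> vgate) (Q : 'I_n -> pauli1) c u v :
  c != 0 -> exists2 c' : C, c' != 0 &
  forall psi x, pauli_fun c u v (nf_circuit c0 V Q psi) x =
                nf_circuit c0 V Q (pauli_fun c' (conjx V u v) (conjz V u v) psi) x.
Proof.
move=> c_neq0.
pose c1 := c * \prod_i conj_phase (V i) (u 0 i) (v 0 i).
pose s := sgn2 (dot2 (conjz V u v) (\row_i pauli1_x (Q i)) +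
                dot2 (\row_i pauli1_z (Q i)) (conjx V u v)).
exists (s * c1) => [|psi x].
  rewrite !mulf_neq0 ?sgn2_neq0 // prodf_seq_neq0.
  by apply/allP => i _; apply: conj_phase_neq0.
rewrite /nf_circuit pauli_funZ pauli_fun_tensor_vgate; congr (_ * _).
apply: eq_tensor => y.
rewrite (eq_pauli_fun _ _ _ (tensor_pauli1 Q psi)) pauli_fun_comm tensor_pauli1.
by rewrite (eq_pauli_fun _ _ _ (pauli_fun_mull s c1 _ _ psi)) pauli_funZ.
Qed.

End Circuits.

Section Codespace.
Variable n : nat.
Variables A B : {vspace bits n}.
Hypothesis hAB : css_orthogonal A B.
Implicit Types (c d : C) (u v : bits n) (psi : state C n).

Definition indicator_state : state C n := fun x => (x \in A)%:R.

(* [#|B|] times the indicator of the orthogonal of [B]. *)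
Definition charsum_state : state C n := fun x => \sum_(b | b \in B) sgn2 (dot2 b x).

Lemma indicator_state_code : codestate A B indicator_state.
Proof.
split=> [a Aa x | b Bb x]; rewrite ?gpowXE ?gpowZE /indicator_state ?rpredDr //.
by case Ax: (x \in A); rewrite ?mulr0 // dot2C (hAB Ax Bb) mul1r.
Qed.

Lemma charsum_stateD x a : a \in A -> charsum_state (x + a) = charsum_state x.
Proof.
by move=> Aa; apply: eq_bigr => b Bb; rewrite dot2Dr (dot2C b a) (hAB Aa Bb) addr0.
Qed.

Lemma charsum_state_code : codestate A B charsum_state.
Proof.
split=> [a Aa x | b Bb x]; rewrite ?gpowXE ?gpowZE ?charsum_stateD //.
rewrite /charsum_state mulr_sumr (reindex_inj (addIr b)) /=.
rewrite (eq_bigl (fun y => y \in B)) => [|y]; last by rewrite rpredDr.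
by apply: eq_bigr => y _; rewrite dot2Dl sgn2D mulrCA sgn2K mulr1.
Qed.

Lemma sum_charsum_state : \sum_y charsum_state y = #|{: bits n}|%:R.
Proof.
rewrite /charsum_state exchange_big /= (bigD1 0) ?mem0v //= sum_sgn2_dot2 eqxx mul1r.
by rewrite big1 ?addr0 // => b /andP [_ b0]; rewrite sum_sgn2_dot2 (negPf b0) mul0r.
Qed.

Lemma sum_sgn2_charsum_state w :
  w \notin B -> \sum_y sgn2 (dot2 w y) * charsum_state y = 0.
Proof.
move=> Bw; under eq_bigr do rewrite /charsum_state mulr_sumr.
rewrite exchange_big /= big1 // => b Bb.
under eq_bigr do rewrite -sgn2D -dot2Dl.
rewrite sum_sgn2_dot2; case: eqP => [wb0|]; last by rewrite mul0r.
by move: Bw; rewrite -(bits_addxK b w) wb0 add0r Bb.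
Qed.

(* Evaluating on [indicator_state] gives the X-parts, summing against [charsum_state]
   the Z-parts. *)
Lemma pauli_fun_code_eq c d u v u' v' : c != 0 ->
  (forall psi, codestate A B psi -> forall x, pauli_fun c u v psi x = pauli_fun d u' v' psi x) ->
  u + u' \in A /\ v + v' \in B.
Proof.
move=> c_neq0 eq_cd.
have Auu' : u + u' \in A.
  have := eq_cd _ indicator_state_code u.
  rewrite /pauli_fun /indicator_state bits_addxx mem0v mulr1; apply: contra_eqT => /negPf->.
  by rewrite mulr0 mulf_neq0 ?sgn2_neq0.
split=> //; apply: contraT => Bvv'.
pose d' := d * sgn2 (dot2 v' (u + u')).
have eq_sum : \sum_y c * charsum_state y =
              \sum_y d' * (sgn2 (dot2 (v + v') y) * charsum_state y).
  apply: eq_bigr => y _; have := eq_cd _ charsum_state_code (y + u).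
  rewrite /pauli_fun bits_addxK -addrA charsum_stateD // => E.
  have vv := sgn2K (dot2 v y).
  transitivity (sgn2 (dot2 v y) * (c * sgn2 (dot2 v y) * charsum_state y)); first by ring: vv.
  by rewrite E /d' !dot2Dr dot2Dl !sgn2D; ring: vv.
move/eqP: eq_sum; rewrite -!mulr_sumr sum_charsum_state sum_sgn2_charsum_state //.
by rewrite mulr0 mulf_eq0 (negPf c_neq0) (negPf (card_bits_neq0 n)).
Qed.

Lemma code_preserving_pauli_perp (P : pauli_data C n) : pc P != 0 ->
  (forall psi, codestate A B psi -> codestate A B (pauli_op P psi)) ->
  (forall b, b \in B -> dot2 (pu P) b = 0) /\ (forall a, a \in A -> dot2 (pv P) a = 0).
Proof.
rewrite pauli_opE => c_neq0 preserves.
have [stabX stabZ] := preserves _ indicator_state_code.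
have at_u : pauli_fun (pc P) (pu P) (pv P) indicator_state (pu P) = pc P.
  by rewrite /pauli_fun /indicator_state bits_addxx mem0v dot20 sgn20 !mulr1.
split=> [b Bb | a Aa].
  have := stabZ b Bb (pu P); rewrite gpowZE at_u -[RHS]mul1r => /(mulIf c_neq0).
  by rewrite dot2C => /sgn2_eq1.
have := stabX a Aa (pu P); rewrite gpowXE at_u /pauli_fun /indicator_state.
rewrite (addrC (pu P) a) bits_addxK Aa !mulr1 -[RHS]mulr1 => /(mulfI c_neq0)/sgn2_eq1.
by rewrite dot2C.
Qed.

End Codespace.

Definition commute_op n (O O' : op C n) : Prop := forall phi x, O (O' phi) x = O' (O phi) x.

Definition commute_on_code n (A B : {vspace bits n}) (G O : op C n) : Prop :=
  forall psi, codestate A B psi -> forall x, G (O psi) x = O (G psi) x.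

Section LogicalCircuit.
Variable n : nat.
Variables A B : {vspace bits n}.
Hypothesis hAB : css_orthogonal A B.
Variables (c0 : C) (V : 'I_n -> vgate) (Q : 'I_n -> pauli1).
Local Notation G := (nf_circuit c0 V Q).
Hypothesis hG : logical_operator A B G.

Lemma nf_circuitB (phi phi' : state C n) x :
  G (fun y => phi y - phi' y) x = G phi x - G phi' x.
Proof. by rewrite /nf_circuit (eq_tensor _ (tensorB _ phi phi')) tensorB mulrBr. Qed.

Lemma logical_nf_circuit_inj (phi phi' : state C n) :
  (forall x, G phi x = G phi' x) -> forall y, phi y = phi' y.
Proof.
move=> eq_G y; apply/eqP; rewrite -subr_eq0; apply/eqP.
pose chi y := phi y - phi' y.
have chi_sum : \sum_x (chi x)^* * chi x = 0.
  rewrite -[LHS]/(inner chi chi) -hG.1 /inner big1 // => x _.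
  by rewrite nf_circuitB eq_G subrr mulr0.
have chi_ge0 x : true -> 0 <= (chi x)^* * chi x by rewrite -normCKC exprn_ge0.
have := @psumr_eq0P _ _ _ _ chi_ge0 chi_sum y isT.
by rewrite -normCKC => /eqP; rewrite sqrf_eq0 normr_eq0 => /eqP.
Qed.

(* [P G = G P'] by [nf_circuit_conj], so [P = P'] on the code as [G] is injective. *)
Lemma commuting_pauli_conj c u v : c != 0 ->
  commute_on_code A B G (pauli_fun c u v) ->
  u + conjx V u v \in A /\ v + conjz V u v \in B.
Proof.
move=> c_neq0 commG; have [c' c'_neq0 conjG] := nf_circuit_conj c0 V Q u v c_neq0.
apply: (pauli_fun_code_eq hAB c_neq0) => psi code_psi x.
apply: (@logical_nf_circuit_inj _ (pauli_fun c' (conjx V u v) (conjz V u v) psi)) => {}x.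
by rewrite -conjG commG.
Qed.

Lemma stabilizer_commute u v : u \in A -> v \in B ->
  commute_on_code A B G (pauli_fun 1 u v).
Proof.
move=> Au Bv.
suff stab psi : codestate A B psi -> pauli_fun 1 u v psi = psi.
  by move=> psi code_psi x; rewrite stab // stab //; apply: hG.2.
move=> [stabX stabZ]; apply: boolp.funext => x.
rewrite /pauli_fun mul1r -gpowXE stabX // dot2Dr (dot2C v u) (hAB Au Bv) addr0.
by rewrite -gpowZE stabZ.
Qed.

Lemma stabilizerX_conj a : a \in A -> conjx V a 0 \in A /\ conjz V a 0 \in B.
Proof.
move=> Aa; have [] := commuting_pauli_conj (oner_neq0 _) (stabilizer_commute Aa (mem0v B)).
by rewrite rpredDl // add0r.
Qed.

Lemma stabilizerZ_conj b : b \in B -> conjx V 0 b \in A /\ conjz V 0 b \in B.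
Proof.
move=> Bb; have [] := commuting_pauli_conj (oner_neq0 _) (stabilizer_commute (mem0v A) Bb).
by rewrite add0r rpredDl.
Qed.

Hypothesis hns : non_splitting A B.

(* Going through Z and back to X multiplies each bit by [zofX * xofZ]. *)
Lemma hadamard_type_all i0 : hadamard_type (V i0) -> forall i, hadamard_type (V i).
Proof.
move=> H_i0; pose f (i : 'I_n) := zofX (V i) * xofZ (V i).
have Af a : a \in A -> mask_bits f a \in A.
  move=> /stabilizerX_conj [_ /stabilizerZ_conj [+ _]].
  by congr (_ \in A); apply/rowP => i; rewrite !mxE /f; ring.
have Bf b : b \in B -> mask_bits f b \in B.
  move=> /stabilizerZ_conj [/stabilizerX_conj [_ +] _].
  by congr (_ \in B); apply/rowP => i; rewrite !mxE /f; ring.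
have [f1 i|f0] := non_splitting_mask_bits hns Af Bf.
  by rewrite /hadamard_type; have [-> ->] := F2_mul_eq1 (f1 i).
move: H_i0 (f0 i0); rewrite /f => /andP [/eqP-> /eqP->].
by rewrite mulr1 => /eqP; rewrite oner_eq0.
Qed.

Section HadamardType.
Hypothesis hH : forall i, hadamard_type (V i).

Lemma memA_B a : a \in A -> a \in B.
Proof.
move=> /stabilizerX_conj [_]; congr (_ \in B); apply/rowP => i.
by have /andP [/eqP zX _] := hH i; rewrite !mxE zX mulr0 addr0 mul1r.
Qed.

Lemma memB_A b : b \in B -> b \in A.
Proof.
move=> /stabilizerZ_conj [+ _]; congr (_ \in A); apply/rowP => i.
by have /andP [_ /eqP xZ] := hH i; rewrite !mxE xZ mulr0 add0r mul1r.
Qed.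

Lemma hadamard_type_cases :
  [\/ forall i, V i = gPH, forall i, V i = gHP | forall i, V i = gH].
Proof.
pose fX (i : 'I_n) := xofX (V i); pose fZ (i : 'I_n) := zofZ (V i).
have AfX a : a \in A -> mask_bits fX a \in A.
  move=> /stabilizerX_conj [+ _]; congr (_ \in A).
  by apply/rowP => i; rewrite !mxE mulr0 addr0.
have AfZ a : a \in A -> mask_bits fZ a \in A.
  move=> /memA_B /stabilizerZ_conj [_ /memB_A]; congr (_ \in A).
  by apply/rowP => i; rewrite !mxE mulr0 add0r.
have BfX b : b \in B -> mask_bits fX b \in B by move=> /memB_A /AfX /memA_B.
have BfZ b : b \in B -> mask_bits fZ b \in B by move=> /memB_A /AfZ /memA_B.
have [fX1|fX0] := non_splitting_mask_bits hns AfX BfX.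
  by apply: Or31 => i; move: (hH i) (fX1 i); rewrite /fX; case: (V i).
have [fZ1|fZ0] := non_splitting_mask_bits hns AfZ BfZ.
  by apply: Or32 => i; move: (hH i) (fX0 i) (fZ1 i); rewrite /fX /fZ; case: (V i).
by apply: Or33 => i; move: (hH i) (fX0 i) (fZ0 i); rewrite /fX /fZ; case: (V i).
Qed.

Lemma fixed_paulis_dot2 u v u' v' :
  (forall b, b \in B -> dot2 u b = 0) -> (forall b, b \in B -> dot2 u' b = 0) ->
  (forall a, a \in A -> dot2 v' a = 0) ->
  u + conjx V u v \in A -> v + conjz V u v \in B -> u' + conjx V u' v' \in A ->
  dot2 v u' + dot2 v' u = 0.
Proof.
move=> u_perp u'_perp v'_perp fixX fixZ fixX'.
suff [[Au Av]|[Auv Auv']] : u \in A /\ v \in A \/ u + v \in A /\ u' + v' \in A.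
- by rewrite (dot2C v) u'_perp ?memA_B // v'_perp // addr0.
- rewrite -(bits_addKx u v) -(bits_addKx u' v') (dot2Dl u (u + v)) (dot2Dl u' (u' + v')).
  rewrite (dot2C (u + v)) (u'_perp (u + v)) ?memA_B //.
  rewrite (dot2C (u' + v')) (u_perp (u' + v')) ?memA_B //.
  by rewrite !addr0 (dot2C u') F2_addxx.
have [VPH|VHP|VH] := hadamard_type_cases; [left|left|right].
- have conjxE w w' : conjx V w w' = w + w' by apply/rowP => i; rewrite !mxE VPH /= !mul1r.
  have conjzE w w' : conjz V w w' = w by apply/rowP => i; rewrite !mxE VPH /= mul1r mul0r addr0.
  move: fixX fixZ; rewrite conjxE conjzE bits_addKx => Av /memB_A Avu.
  by split=> //; rewrite -(rpredDl _ Av).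
- have conjxE w w' : conjx V w w' = w' by apply/rowP => i; rewrite !mxE VHP /= mul1r mul0r add0r.
  have conjzE w w' : conjz V w w' = w + w' by apply/rowP => i; rewrite !mxE VHP /= !mul1r.
  move: fixX fixZ; rewrite conjxE conjzE addrCA bits_addxx addr0 => Auv /memB_A Au.
  by split=> //; rewrite -(rpredDl _ Au).
have conjxE w w' : conjx V w w' = w' by apply/rowP => i; rewrite !mxE VH /= mul1r mul0r add0r.
by rewrite -(conjxE u v) -(conjxE u' v').
Qed.

End HadamardType.
End LogicalCircuit.

Section UncoveredQubit.
Variables (k p : nat) (U : bits p -> bits p -> C) (I : {set p.-tuple 'I_k}).
Variable j : 'I_k.
Hypothesis hj : ~~ covered I j.

(* [Defs.restrict], since [complex] also exports a [restrict]. *)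
Definition addressed_ker (x y : bits k) : C :=
  (\prod_(tau in I) U (Defs.restrict x tau) (Defs.restrict y tau)) *
  \prod_(l < k | ~~ covered I l) (x 0 l == y 0 l)%:R.

Lemma addressed_opE phi x : addressed_op U I phi x = \sum_y addressed_ker x y * phi y.
Proof. by []. Qed.

Lemma addressed_kerD (x y : bits k) :
  addressed_ker (x + delta_mx 0 j) (y + delta_mx 0 j) = addressed_ker x y.
Proof.
have restrictD z tau : tau \in I -> Defs.restrict (z + delta_mx 0 j) tau = Defs.restrict z tau.
  move=> I_tau; apply/rowP => l; rewrite !mxE.
  have /negPf-> : tnth tau l != j.
    apply: contraNneq hj => tau_l; apply/existsP; exists tau.
    by rewrite I_tau -tau_l mem_tnth.
  by rewrite andbF addr0.
rewrite /addressed_ker; congr (_ * _).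
  by apply: eq_bigr => tau I_tau; rewrite !restrictD.
by apply: eq_bigr => l _; rewrite !mxE (inj_eq (addIr _)).
Qed.

Variable alpha : bits k -> bits k -> C.
Hypothesis hW : forall phi y, addressed_op U I phi y =
  \sum_(s : bits k) \sum_(t : bits k) alpha s t * gpow (Xg C) s (gpow (Zg C) t phi) y.

Lemma pauli_coef_ker y z : \sum_t alpha (y + z) t * sgn2 (dot2 t z) = addressed_ker y z.
Proof.
have delta_z : addressed_op U I (fun w => (w == z)%:R) y = addressed_ker y z.
  rewrite addressed_opE (bigD1 z) //= eqxx mulr1 big1 ?addr0 // => w /negPf->.
  exact: mulr0.
rewrite -delta_z hW [RHS](bigD1 (y + z)) //= [X in _ = _ + X]big1 ?addr0 => [|s s_neq].
  by apply: eq_bigr => t _; rewrite gpowXE gpowZE addrA bits_addxx add0r eqxx mulr1.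
apply: big1 => t _; rewrite gpowXE gpowZE (_ : (y + s == z) = false) ?mulr0 //.
by rewrite -(inj_eq (addrI y)) bits_addKx (negPf s_neq).
Qed.

Lemma pauli_coef_fourier s t0 :
  alpha s t0 * #|{: bits k}|%:R = \sum_z sgn2 (dot2 t0 z) * addressed_ker (z + s) z.
Proof.
under [RHS]eq_bigr => z _.
  rewrite -pauli_coef_ker (addrC z s) -addrA bits_addxx addr0 mulr_sumr.
  under eq_bigr do rewrite mulrCA -sgn2D -dot2Dl.
  over.
rewrite exchange_big /= (bigD1 t0) //= -mulr_sumr sum_sgn2_dot2 bits_addxx eqxx mul1r.
rewrite big1 ?addr0 // => t t_neq; rewrite -mulr_sumr sum_sgn2_dot2.
rewrite (_ : (t0 + t == 0) = false) ?mul0r ?mulr0 //.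
by rewrite -(inj_eq (addrI t0)) bits_addKx addr0 (negPf t_neq).
Qed.

(* Shifting by the j-th unit vector flips the sign of each term when [t_j = 1]. *)
Lemma pauli_coef_uncovered (s t : bits k) : (s 0 j != 0) || (t 0 j != 0) -> alpha s t = 0.
Proof.
move=> st_j; apply: (mulIf (card_bits_neq0 k)); rewrite mul0r pauli_coef_fourier.
have [s_j|s_j] /= := boolP (s 0 j != 0).
  apply: big1 => z _; rewrite /addressed_ker (bigD1 j) //= mxE.
  rewrite (_ : (z 0 j + s 0 j == z 0 j) = false) ?mul0r ?mulr0 //.
  by apply: negPf; rewrite -subr_eq0 addrAC subrr add0r.
have t_j : t 0 j = 1 by move: st_j; rewrite (negPf s_j) /=; case: (F2_cases (t 0 j)) => ->.
apply/eqP; set S := \sum_z _; suff: S *+ 2 == 0 by rewrite mulrn_eq0.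
rewrite mulr2n {1}/S (reindex_inj (addIr (delta_mx 0 j))) -big_split big1 //= => z _.
rewrite addrAC addressed_kerD dot2Dr dot2_delta t_j sgn2D sgn21.
by rewrite mulrN1 mulNr addNr.
Qed.

End UncoveredQubit.

Lemma lbar_pow_comm n k (L : 'I_k -> pauli_data C n) (O : op C n) (s : bits k) psi :
  (forall l, s 0 l = 1 -> commute_op O (pauli_op (L l))) ->
  O (lbar_pow L s psi) = lbar_pow L s (O psi).
Proof.
move=> commO; rewrite /lbar_pow; elim: (enum 'I_k) => //= l r IH.
by case: ifP => // /eqP s_l; rewrite -IH; apply: boolp.funext; apply: commO.
Qed.

Section LogicalAction.
Variables (n k : nat) (A B : {vspace bits n}) (LX LZ : 'I_k -> pauli_data C n).
Variables (j : 'I_k) (alpha : bits k -> bits k -> C) (G : op C n).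
Hypothesis hGW : forall psi, codestate A B psi -> forall x, G psi x =
  \sum_(s : bits k) \sum_(t : bits k) alpha s t * lbar_pow LX s (lbar_pow LZ t psi) x.
Hypothesis halpha : forall s t : bits k, (s 0 j != 0) || (t 0 j != 0) -> alpha s t = 0.

Lemma logical_action_commute (P : pauli_data C n) :
  (forall psi, codestate A B psi -> codestate A B (pauli_op P psi)) ->
  (forall l, l != j -> commute_op (pauli_op P) (pauli_op (LX l))) ->
  (forall l, l != j -> commute_op (pauli_op P) (pauli_op (LZ l))) ->
  commute_on_code A B G (pauli_op P).
Proof.
move=> preserves commX commZ psi code_psi x.
have avoid_j (w : bits k) : w 0 j = 0 -> forall l, w 0 l = 1 -> l != j.
  by move=> w_j l w_l; apply: contraTneq isT => l_j; move: w_l; rewrite l_j w_j.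
have term s t : alpha s t * lbar_pow LX s (lbar_pow LZ t (pauli_op P psi)) x =
                alpha s t * pauli_op P (lbar_pow LX s (lbar_pow LZ t psi)) x.
  have [/halpha->|] := boolP ((s 0 j != 0) || (t 0 j != 0)); first by rewrite !mul0r.
  rewrite negb_or !negbK => /andP [/eqP s_j /eqP t_j].
  rewrite -(lbar_pow_comm (L := LZ) (O := pauli_op P)) => [|l /(avoid_j _ t_j)].
    rewrite -(lbar_pow_comm (L := LX) (O := pauli_op P)) // => l /(avoid_j _ s_j).
    exact: commX.
  exact: commZ.
have -> : G psi = fun y => \sum_s \sum_t alpha s t * lbar_pow LX s (lbar_pow LZ t psi) y.
  by apply: boolp.funext; apply: hGW.
rewrite hGW; last exact: preserves.
under eq_bigr => s _ do under eq_bigr => t _ do rewrite term.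
rewrite !pauli_opE /pauli_fun mulr_sumr; apply: eq_bigr => s _.
by rewrite mulr_sumr; apply: eq_bigr => t _; rewrite mulrCA.
Qed.

End LogicalAction.

Section ValidLogicals.
Variables (n k : nat) (A B : {vspace bits n}) (LX LZ : 'I_k -> pauli_data C n).
Hypothesis hL : valid_logicals A B LX LZ.

Lemma valid_logicals_pc_neq0 j : pc (LX j) != 0 /\ pc (LZ j) != 0.
Proof.
have pc_neq0 (x : C) : x ^+ 4 = 1 -> x != 0.
  by move=> x4; apply: contra_eq_neq x4 => ->; rewrite expr0n eq_sym oner_eq0.
by have [/pc_neq0 ? /pc_neq0 ?] := hL.1 j.
Qed.

Lemma valid_logicals_commute j l : l != j ->
  [/\ commute_op (pauli_op (LX j)) (pauli_op (LX l)),
      commute_op (pauli_op (LX j)) (pauli_op (LZ l)),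
      commute_op (pauli_op (LZ j)) (pauli_op (LX l)) &
      commute_op (pauli_op (LZ j)) (pauli_op (LZ l))].
Proof.
move: hL => /= [_ [_ [_ [_ comm]]]] l_j; have j_l : j != l by rewrite eq_sym.
split=> phi x; [exact: (comm j l j_l phi x).1 | exact: (comm j l j_l phi x).2.2 |
                exact: esym (comm l j l_j phi x).2.2 | exact: (comm j l j_l phi x).2.1].
Qed.

End ValidLogicals.

End Quantum.

Theorem proposition8 (R : realType) (n k p : nat)
  (A B : {vspace 'rV['F_2]_n})
  (hAB : css_orthogonal A B) (hns : non_splitting A B)
  (hk : k = (n - \dim A - \dim B)%N)
  (LX LZ : 'I_k -> pauli_data R[i] n) (hL : valid_logicals A B LX LZ)
  (hp : (0 < p)%N) (U : bits p -> bits p -> R[i]) (hU : unitary_ker U)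
  (hPA : partially_addressable A B LX LZ U) :
  forall (I : {set p.-tuple 'I_k}) (c : R[i]) (V : 'I_n -> vgate)
         (Q : 'I_n -> pauli1),
    c^* * c = 1 ->
    realizes_addressing A B LX LZ U I (nf_circuit c V Q) ->
    forall i : 'I_n, V i <> gH /\ V i <> gPH /\ V i <> gHP.
Proof.
move=> I c V Q _ [[_ [_ [_ [j hj]]]] [hG [alpha [hW hGW]]]] i.
have [/(hadamard_type_all hAB hG hns) hH|] := boolP (hadamard_type (V i)); last by case: (V i).
exfalso.
have [pcX pcZ] := valid_logicals_pc_neq0 hL j.
have comm_ne := valid_logicals_commute hL (j := j).
move: hL => /= [_ [preserves [_ [anti _]]]].
have halpha := pauli_coef_uncovered hj hW.
have commX : commute_on_code A B (nf_circuit c V Q) (pauli_op (LX j)).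
  by apply: (logical_action_commute hGW halpha (preserves j).1.2) => l /comm_ne[].
have commZ : commute_on_code A B (nf_circuit c V Q) (pauli_op (LZ j)).
  by apply: (logical_action_commute hGW halpha (preserves j).2.2) => l /comm_ne[].
rewrite !pauli_opE in commX commZ.
have [fixX fixZ] := commuting_pauli_conj hAB hG pcX commX.
have [fixX' _] := commuting_pauli_conj hAB hG pcZ commZ.
have [uX_perp _] := code_preserving_pauli_perp hAB pcX (preserves j).1.2.
have [uZ_perp vZ_perp] := code_preserving_pauli_perp hAB pcZ (preserves j).2.2.
have := anticommuting_pauli_dot2 pcX pcZ (anti j).
by rewrite (fixed_paulis_dot2 hAB hG hns hH uX_perp uZ_perp vZ_perp fixX fixZ fixX').
Qed.
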